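(* For $n\geq 4$ and $m\in\{3,\dots,n-1\}$, the algebra $\mathtt{A}_n^{\{m\}}$ has infinite representation type.
   Context: $\Bbbk$ is an algebraically closed field; arrows compose right to left. $\mathtt{A}_n$ is the algebra of the quiver with vertices $1,\dots,n$, arrows $a_i:i\to i+1$, $b_i:i+1\to i$ ($1\le i\le n-1$), relations $a_ib_i=b_{i+1}a_{i+1}$ ($1\le i\le n-2$), $a_{n-1}b_{n-1}=0$. For $X\subset\{2,\dots,n\}$, $e_X$ is the sum of primitive idempotents for vertices in $\{1\}\cup X$ and $\mathtt{A}_n^X=e_X\mathtt{A}_ne_X$. *)

From HB Require Import structures.
From mathcomp Require Import all_boot all_order all_algebra.
Set Implicit Arguments. Unset Strict Implicit. Unset Printing Implicit Defensive.
Import GRing.Theory.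
Local Open Scope ring_scope.

(* Arrows of the quiver of A_n:  Aa i = a_i : i -> i+1,  Bb i = b_i : i+1 -> i. *)
Inductive arrow := Aa of nat | Bb of nat.

Definition step (n : nat) (v : nat) (x : arrow) : option nat :=
  match x with
  | Aa i => if (v == i) && (1 <= i <= n.-1)%N then Some i.+1 else None
  | Bb i => if (v == i.+1) && (1 <= i <= n.-1)%N then Some i else None
  end.

(* A path is (source vertex, list of arrows in the order they are traversed).
   With composition written right to left, the algebra element  p_k ... p_1
   is represented by (s, [:: p_1; ...; p_k]). *)
Definition path := (nat * seq arrow)%type.

Definition ptarget (n : nat) (p : path) : option nat :=
  foldl (fun o x => obind (fun v => step n v x) o) (Some p.1) p.2.

(* The vertex set {1} u X of the idempotent e_X. *)
Definition inS (X : seq nat) (v : nat) : bool := (v == 1%N) || (v \in X).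

(* Paths of the quiver whose source and target lie in {1} u X; these form a
   basis of e_X kQ e_X. *)
Definition Spath (n : nat) (X : seq nat) (p : path) : bool :=
  [&& inS X p.1, (1 <= p.1 <= n)%N &
      match ptarget n p with Some t => inS X t | None => false end].

(* A finite-dimensional representation: a space K^d (row vectors) and, for every
   path, a matrix (only values on Spaths matter).  The path algebra element p
   acts by v |-> v *m ract p. *)
Record rep (K : fieldType) := Rep { rdim : nat; ract : path -> 'M[K]_rdim }.

(* Being a unital (left) module over A_n^X = e_X (kQ/I) e_X
   = e_X kQ e_X / e_X I e_X:  multiplicative on the path basis of e_X kQ e_X,
   unital (1 = sum of e_v, v in {1} u X), and annihilating e_X I e_X, which is
   spanned by the elements  u r w  with u, w paths and r a defining relation. *)
Definition is_module (K : fieldType) (n : nat) (X : seq nat) (M : rep K) : Prop :=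
  [/\ \sum_(v <- iota 1 n | inS X v) ract M (v, [::]) = 1%:M,
      (forall p q : path, Spath n X p -> Spath n X q ->
         if ptarget n p == Some q.1
         then ract M (p.1, p.2 ++ q.2) = ract M p *m ract M q
         else ract M p *m ract M q = 0),
      (* a_i b_i = b_{i+1} a_{i+1}, 1 <= i <= n-2 *)
      (forall (i s : nat) (l1 l2 : seq arrow), (1 <= i <= n - 2)%N ->
         Spath n X (s, l1 ++ [:: Bb i; Aa i] ++ l2) ->
         ract M (s, l1 ++ [:: Bb i; Aa i] ++ l2)
         = ract M (s, l1 ++ [:: Aa i.+1; Bb i.+1] ++ l2)) &
      (* a_{n-1} b_{n-1} = 0 *)
      (forall (s : nat) (l1 l2 : seq arrow),
         Spath n X (s, l1 ++ [:: Bb n.-1; Aa n.-1] ++ l2) ->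
         ract M (s, l1 ++ [:: Bb n.-1; Aa n.-1] ++ l2) = 0)].

Definition is_hom (K : fieldType) (n : nat) (X : seq nat) (M N : rep K)
  (f : 'M[K]_(rdim M, rdim N)) : Prop :=
  forall p : path, Spath n X p -> ract M p *m f = f *m ract N p.

Arguments is_hom [K] n X M N f.

Definition iso_mod (K : fieldType) (n : nat) (X : seq nat) (M N : rep K) : Prop :=
  exists (f : 'M[K]_(rdim M, rdim N)) (g : 'M[K]_(rdim N, rdim M)),
    [/\ is_hom n X M N f, f *m g = 1%:M & g *m f = 1%:M].

Definition is_submod (K : fieldType) (n : nat) (X : seq nat) (M : rep K)
  (U : 'M[K]_(rdim M)) : Prop :=
  forall p : path, Spath n X p -> (U *m ract M p <= U)%MS.

Arguments is_submod [K] n X M U.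

Definition indecomposable (K : fieldType) (n : nat) (X : seq nat) (M : rep K) : Prop :=
  (0 < rdim M)%N /\
  forall U V : 'M[K]_(rdim M), is_submod n X M U -> is_submod n X M V ->
    \rank (U :&: V)%MS = 0%N -> (U + V == 1%:M)%MS ->
    (\rank U == 0%N) || (\rank V == 0%N).

Definition infinite_rep_type (K : fieldType) (n : nat) (X : seq nat) : Prop :=
  ~ exists (k : nat) (F : 'I_k -> rep K),
      (forall i, is_module n X (F i)) /\
      forall M : rep K, is_module n X M -> indecomposable n X M ->
        exists i, iso_mod n X M (F i).

From mathcomp Require Import all_boot all_order all_algebra zify.

(* For 3 <= m < n, a path of A_n between the distinct vertices 1 and m has
   length at least m - 1, and a nontrivial loop at 1 or m has length at least 2.
   So A_n^{m} has a module M_lam with basis top v, soc v (v in {1, m}) on which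
   a path from s to t acts through s, t and its length only: length 0 by the
   idempotent at s, the minimal length by the map top s -> soc t (scaled by
   lam when s = 1 and t = m), longer paths by 0.  This respects the
   commutativity relations, which preserve endpoints and length, and kills
   the paths through n, which are long.  The four maps top s -> soc t
   form a cycle of type Ã_3, and M_lam is its band module with parameter lam.
   In a decomposition U + V, the summand avoiding soc 1 has no vector with a
   nonzero top component, so the other one contains vectors with nonzero top 1
   and top m components, and these generate M_lam.  An isomorphism
   M_lam ~ M_lam' has equal diagonal entries on the four basis vectors, which
   forces lam = lam'.  As an algebraically closed field is infinite, no finite
   list of modules contains all the M_lam. *)

Set Implicit Arguments.
Unset Strict Implicit.
Unset Printing Implicit Defensive.
Import GRing.Theory.

Section Paths.
Variable n : nat.

Lemma ptarget_cons s x l :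
  ptarget n (s, x :: l) = obind (fun v => ptarget n (v, l)) (step n s x).
Proof.
rewrite /ptarget /=; case: (step n s x) => [w|] //=.
by elim: l => [|y l IH].
Qed.

Lemma ptarget_cat s l1 l2 :
  ptarget n (s, l1 ++ l2) = obind (fun v => ptarget n (v, l2)) (ptarget n (s, l1)).
Proof.
rewrite /ptarget /= foldl_cat; case: (foldl _ _ l1) => //=.
by elim: l2 => [|y l IH].
Qed.

Lemma step_adjacent v x w : step n v x = Some w -> w = v.+1 \/ v = w.+1.
Proof. by case: x => i /=; case: ifP => // /andP[/eqP -> _] [<-]; [left | right]. Qed.

Lemma ptarget_dist s l t : ptarget n (s, l) = Some t ->
  (t <= s + size l)%N /\ (s <= t + size l)%N.
Proof.
elim: l s => [|x l IH] s; first by case=> ->; lia.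
rewrite ptarget_cons; case E: (step n s x) => [w|] //= /IH.
have := step_adjacent E; lia.
Qed.

Lemma ptarget_single s x t : ptarget n (s, [:: x]) = Some t -> t <> s.
Proof.
rewrite ptarget_cons; case E: (step n s x) => [w|] //= [<-].
have := step_adjacent E; lia.
Qed.

Lemma ptarget_comm_rel s l1 l2 i : (1 <= i <= n - 2)%N ->
  ptarget n (s, l1 ++ [:: Bb i; Aa i] ++ l2) =
  ptarget n (s, l1 ++ [:: Aa i.+1; Bb i.+1] ++ l2).
Proof.
move=> hi; rewrite !ptarget_cat; case: (ptarget n (s, l1)) => [v|] //=.
rewrite !ptarget_cons /=.
have [_|//] := eqVneq v i.+1.
have hi1 : (0 < i <= n.-1)%N by lia.
have hi2 : (i < n.-1)%N by lia.
by rewrite hi1 hi2 /= !ptarget_cons /= !eqxx hi1 hi2.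
Qed.

Lemma ptarget_visit_last s l1 l2 t :
  ptarget n (s, l1 ++ [:: Bb n.-1; Aa n.-1] ++ l2) = Some t ->
  (n <= s + size l1)%N /\ (n <= t + size l2)%N.
Proof.
rewrite ptarget_cat; case E: (ptarget n (s, l1)) => [v|] //=.
rewrite !ptarget_cons /=; case: ifP => // /andP[/eqP ev hn] /=.
rewrite ptarget_cons /= eqxx hn /= => El2.
have := ptarget_dist E; have := ptarget_dist El2; lia.
Qed.

Lemma ptarget_loop v : (0 < v < n)%N -> ptarget n (v, [:: Aa v; Bb v]) = Some v.
Proof.
move=> hv; rewrite !ptarget_cons /= eqxx ifT /=; last by lia.
by rewrite ptarget_cons /= eqxx ifT //; lia.
Qed.

Fixpoint up (v k : nat) : seq arrow :=
  if k is k'.+1 then Aa v :: up v.+1 k' else [::].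

Fixpoint down (v k : nat) : seq arrow :=
  if k is k'.+1 then Bb v.-1 :: down v.-1 k' else [::].

Lemma size_up v k : size (up v k) = k.
Proof. by elim: k v => //= k IH v; rewrite IH. Qed.

Lemma size_down v k : size (down v k) = k.
Proof. by elim: k v => //= k IH v; rewrite IH. Qed.

Lemma ptarget_up v k : (0 < v)%N -> (v + k <= n)%N ->
  ptarget n (v, up v k) = Some (v + k).
Proof.
elim: k v => [|k IH] v h1 h2 /=; first by rewrite addn0.
rewrite ptarget_cons /= eqxx ifT /=; last by lia.
by rewrite IH ?addSnnS //; lia.
Qed.

Lemma ptarget_down v k : (k < v <= n)%N ->
  ptarget n (v, down v k) = Some (v - k).
Proof.
elim: k v => [|k IH] v hv /=; first by rewrite subn0.
rewrite ptarget_cons /= ifT /=; last by apply/andP; split; [apply/eqP|]; lia.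
by rewrite IH; [congr Some|]; lia.
Qed.

End Paths.

Local Open Scope ring_scope.

Lemma submod_mul (K : fieldType) n X (M : rep K) (W : 'M[K]_(rdim M)) p (w : 'rV_(rdim M)) :
  is_submod n X M W -> Spath n X p -> (w <= W)%MS -> (w *m ract M p <= W)%MS.
Proof. by move=> sW hp hw; apply: submx_trans (submxMr _ hw) (sW p hp). Qed.

Lemma addsmx_full_split (K : fieldType) d (U V : 'M[K]_d) (u : 'rV_d) :
  (1%:M <= U + V)%MS -> exists a b, [/\ (a <= U)%MS, (b <= V)%MS & u = a + b].
Proof.
move=> full; have /sub_addsmxP[[a b] /= ->] := submx_trans (submx1 u) full.
by exists (a *m U), (b *m V); split; rewrite ?submxMl.
Qed.

Lemma mul_row_delta_mx (K : fieldType) d e (w : 'rV[K]_d) (i : 'I_d) (j : 'I_e) :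
  w *m delta_mx i j = w 0 i *: delta_mx 0 j.
Proof.
apply/rowP => k; rewrite !mxE (bigD1 i) //= big1 => [|x /negbTE xi].
  by rewrite !mxE eqxx /= addr0 mulr_natr.
by rewrite !mxE xi mulr0.
Qed.

Lemma mul_delta_mx_entry (K : fieldType) d e p (f : 'M[K]_(e, p)) (i : 'I_d) j k r :
  (delta_mx i j *m f) k r = (k == i)%:R * f j r.
Proof.
rewrite !mxE (bigD1 j) //= big1 => [|x /negbTE xj].
  by rewrite !mxE eqxx andbT addr0.
by rewrite !mxE xj andbF mul0r.
Qed.

Lemma mul_mx_delta_entry (K : fieldType) d e p (f : 'M[K]_(d, e)) i (j : 'I_p) k r :
  (f *m delta_mx i j) k r = f k i * (r == j)%:R.
Proof.
rewrite !mxE (bigD1 i) //= big1 => [|x /negbTE xi].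
  by rewrite !mxE eqxx addr0.
by rewrite !mxE xi mulr0.
Qed.

Section Band.
Variables (K : fieldType) (n m : nat).
Hypotheses (m_gt2 : (2 < m)%N) (m_lt_n : (m < n)%N).

Definition top (v : nat) : 'I_4 := if v == 1%N then @Ordinal 4 0 isT else @Ordinal 4 2 isT.
Definition soc (v : nat) : 'I_4 := if v == 1%N then @Ordinal 4 1 isT else @Ordinal 4 3 isT.

Definition idem (v : nat) : 'M[K]_4 :=
  delta_mx (top v) (top v) + delta_mx (soc v) (soc v).

Definition rad_len (s t : nat) : nat := if s == t then 2%N else m.-1.

Definition band_mx (lam : K) (s t L : nat) : 'M[K]_4 :=
  if L == 0%N then (s == t)%:R *: idem s
  else if L == rad_len s t then
    (if (s == 1%N) && (t != 1%N) then lam else 1) *: delta_mx (top s) (soc t)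
  else 0.

Definition band_rep (lam : K) : rep K :=
  @Rep K 4 (fun p => if ptarget n p is Some t then band_mx lam p.1 t (size p.2) else 0).

Local Notation vertex := (inS [:: m]).
Local Notation erow j := (delta_mx 0 j : 'rV[K]_4).

Lemma vertexP v : vertex v -> v = 1%N \/ v = m.
Proof. by rewrite /inS mem_seq1 => /orP[/eqP|/eqP]; [left|right]. Qed.

Lemma vertex1 : vertex 1%N.
Proof. by []. Qed.

Lemma vertexm : vertex m.
Proof. by rewrite /inS mem_seq1 eqxx orbT. Qed.

Let m_neq1 : (m == 1%N) = false.
Proof. by apply/eqP; lia. Qed.

Lemma top_neq_soc s t : top s != soc t.
Proof. by rewrite /top /soc; do 2 case: ifP. Qed.

Lemma soc_neq_top s t : soc s != top t.
Proof. by rewrite eq_sym top_neq_soc. Qed.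

Lemma eq_top s t : vertex s -> vertex t -> (top s == top t) = (s == t).
Proof.
by move=> /vertexP[]-> /vertexP[]->; rewrite /top ?eqxx ?m_neq1 // (eq_sym 1%N) m_neq1.
Qed.

Lemma eq_soc s t : vertex s -> vertex t -> (soc s == soc t) = (s == t).
Proof.
by move=> /vertexP[]-> /vertexP[]->; rewrite /soc ?eqxx ?m_neq1 // (eq_sym 1%N) m_neq1.
Qed.

Lemma idem_mul s t : vertex s -> vertex t -> idem s *m idem t = (s == t)%:R *: idem s.
Proof.
move=> hs ht; rewrite /idem mulmxDl !mulmxDr !mul_delta_mx_cond eq_top // eq_soc //.
rewrite (negbTE (top_neq_soc _ _)) (negbTE (soc_neq_top _ _)) !mulr0n addr0 add0r.
by case: eqP => [<-|_]; rewrite ?scale1r ?scale0r ?mulr0n ?addr0.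
Qed.

Lemma idem1_add_idem : idem 1%N + idem m = 1%:M.
Proof.
apply/matrixP => i j; rewrite /idem /top /soc m_neq1 !mxE.
by case: i j => [[|[|[|[|i]]]] Hi] [[|[|[|[|j]]]] Hj]; rewrite //= ?(addr0, add0r).
Qed.

Lemma band_mx0 lam v : band_mx lam v v 0 = idem v.
Proof. by rewrite /band_mx !eqxx scale1r. Qed.

Lemma band_mx_loop lam v : band_mx lam v v 2%N = delta_mx (top v) (soc v).
Proof. by rewrite /band_mx /rad_len eqxx andbN scale1r. Qed.

Lemma band_mx_cross lam : band_mx lam 1%N m m.-1 = lam *: delta_mx (top 1%N) (soc m).
Proof. by rewrite /band_mx /rad_len (eq_sym 1%N) m_neq1 !eqxx ifN //; apply/eqP; lia. Qed.

Lemma band_mx_back lam : band_mx lam m 1%N m.-1 = delta_mx (top m) (soc 1%N).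
Proof. by rewrite /band_mx /rad_len m_neq1 !eqxx ifN ?scale1r //; apply/eqP; lia. Qed.

Lemma idem_band_mx lam s t L : vertex s -> vertex t ->
  idem s *m band_mx lam s t L = band_mx lam s t L.
Proof.
move=> hs ht; rewrite /band_mx; case: ifP => _.
  by rewrite -scalemxAr idem_mul // eqxx scale1r.
case: ifP => _; last by rewrite mulmx0.
rewrite -scalemxAr /idem mulmxDl mul_delta_mx mul_delta_mx_0 ?addr0 //.
exact: soc_neq_top.
Qed.

Lemma band_mx_idem lam s t L : vertex s -> vertex t ->
  band_mx lam s t L *m idem t = band_mx lam s t L.
Proof.
move=> hs ht; rewrite /band_mx; case: ifP => _.
  by rewrite -scalemxAl idem_mul // scalerA; case: (s == t); rewrite ?mulr1 ?mulr0.
case: ifP => _; last by rewrite mul0mx.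
rewrite -scalemxAl /idem mulmxDr mul_delta_mx mul_delta_mx_0 ?add0r //.
exact: soc_neq_top.
Qed.

Lemma band_mx_mul_neq lam s t t' u L1 L2 : vertex t -> vertex t' -> t != t' ->
  vertex s -> vertex u -> band_mx lam s t L1 *m band_mx lam t' u L2 = 0.
Proof.
move=> ht ht' tt' hs hu.
rewrite -(band_mx_idem lam L1 hs ht) -(idem_band_mx lam L2 ht' hu).
by rewrite mulmxA -(mulmxA _ (idem t)) idem_mul // (negbTE tt') scale0r mulmx0 mul0mx.
Qed.

Lemma band_mx_pos lam s t L : L != 0%N ->
  exists c, band_mx lam s t L = c *: delta_mx (top s) (soc t).
Proof.
move=> /negbTE L0; rewrite /band_mx L0; case: ifP => _; first by eexists.
by exists 0; rewrite scale0r.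
Qed.

Lemma band_mx_rad lam s t t' u L1 L2 : L1 != 0%N -> L2 != 0%N ->
  band_mx lam s t L1 *m band_mx lam t' u L2 = 0.
Proof.
move=> /(band_mx_pos lam s t)[c1 ->] /(band_mx_pos lam t' u)[c2 ->].
by rewrite -scalemxAl -scalemxAr mul_delta_mx_0 ?scaler0 // soc_neq_top.
Qed.

Lemma band_mx_long lam s t L : (rad_len s t < L)%N -> band_mx lam s t L = 0.
Proof. by move=> hL; rewrite /band_mx !ifN //; apply/eqP; lia. Qed.

Lemma rad_len_triangle s t u : vertex s -> vertex t -> vertex u ->
  (rad_len s u < rad_len s t + rad_len t u)%N.
Proof.
move=> /vertexP[]-> /vertexP[]-> /vertexP[]->;
  by rewrite /rad_len ?eqxx ?m_neq1 ?(eq_sym 1%N) ?m_neq1; lia.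
Qed.

Lemma rad_len_le_size s t l : vertex s -> vertex t ->
  ptarget n (s, l) = Some t -> (0 < size l)%N -> (rad_len s t <= size l)%N.
Proof.
move=> /vertexP hs /vertexP ht E l0; have [d1 d2] := ptarget_dist E.
rewrite /rad_len; case: l l0 E d1 d2 => [|x [|y l]] //= _ E d1 d2.
  by have := ptarget_single E; case: eqP => [->|]; lia.
by case: eqP; lia.
Qed.

Lemma band_mx_concat lam s t u l1 l2 : vertex s -> vertex t -> vertex u ->
  ptarget n (s, l1) = Some t -> ptarget n (t, l2) = Some u ->
  band_mx lam s u (size l1 + size l2) = band_mx lam s t (size l1) *m band_mx lam t u (size l2).
Proof.
move=> hs ht hu E1 E2.
case: l1 E1 => [[<-]|x1 l1 E1]; first by rewrite band_mx0 idem_band_mx.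
case: l2 E2 => [[<-]|x2 l2 E2]; first by rewrite addn0 band_mx0 band_mx_idem.
rewrite band_mx_rad // band_mx_long //.
have := rad_len_le_size hs ht E1 isT; have := rad_len_le_size ht hu E2 isT.
have := rad_len_triangle hs ht hu; rewrite /=; lia.
Qed.

Lemma Spath_vertexP p : Spath n [:: m] p ->
  exists2 t, ptarget n p = Some t & vertex p.1 && vertex t.
Proof. by case/and3P => -> _; case: (ptarget n p) => // t ht; exists t. Qed.

Lemma Spath_vertex s l t : vertex s -> vertex t -> ptarget n (s, l) = Some t ->
  Spath n [:: m] (s, l).
Proof.
move=> hs ht E; rewrite /Spath E hs ht andbT /=.
by case/vertexP: hs => ->; lia.
Qed.

Lemma band_rep_act lam s l t : ptarget n (s, l) = Some t ->
  ract (band_rep lam) (s, l) = band_mx lam s t (size l).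
Proof. by move=> /= ->. Qed.

Lemma band_rep_unit lam :
  \sum_(v <- iota 1 n | vertex v) ract (band_rep lam) (v, [::]) = 1%:M.
Proof.
have mem_iota1 v : (0 < v <= n)%N -> v \in iota 1 n by rewrite mem_iota; lia.
rewrite big_mkcond (bigD1_seq 1%N) ?iota_uniq ?mem_iota1 //=; last by lia.
rewrite big_mkcond (bigD1_seq m) ?iota_uniq ?mem_iota1 //=; last by lia.
rewrite m_neq1 /inS mem_seq1 eqxx orbT big1 => [|v /negbTE vm].
  by rewrite /= !band_mx0 addr0 idem1_add_idem.
by rewrite mem_seq1 vm; case: (v == 1%N).
Qed.

Lemma band_rep_mul lam p q : Spath n [:: m] p -> Spath n [:: m] q ->
  if ptarget n p == Some q.1
  then ract (band_rep lam) (p.1, p.2 ++ q.2) = ract (band_rep lam) p *m ract (band_rep lam) q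
  else ract (band_rep lam) p *m ract (band_rep lam) q = 0.
Proof.
case: p q => [s l1] [t' l2] /Spath_vertexP[t E1 /andP[hs ht]].
case/Spath_vertexP => u E2 /andP[ht' hu].
rewrite (band_rep_act _ E1) (band_rep_act _ E2) E1.
have [[tt']|tt'] := eqVneq (Some t) (Some t'); last first.
  by rewrite band_mx_mul_neq //; apply: contraNneq tt' => ->.
subst t'; have E : ptarget n (s, l1 ++ l2) = Some u by rewrite ptarget_cat E1.
by rewrite (band_rep_act _ E) size_cat (band_mx_concat _ hs ht hu E1 E2).
Qed.

Lemma band_rep_comm_rel lam i s l1 l2 : (1 <= i <= n - 2)%N ->
  ract (band_rep lam) (s, l1 ++ [:: Bb i; Aa i] ++ l2)
  = ract (band_rep lam) (s, l1 ++ [:: Aa i.+1; Bb i.+1] ++ l2).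
Proof. by move=> hi /=; rewrite ptarget_comm_rel // !size_cat. Qed.

Lemma band_rep_zero_rel lam s l1 l2 : Spath n [:: m] (s, l1 ++ [:: Bb n.-1; Aa n.-1] ++ l2) ->
  ract (band_rep lam) (s, l1 ++ [:: Bb n.-1; Aa n.-1] ++ l2) = 0.
Proof.
case/Spath_vertexP => t E /andP[/vertexP hs /vertexP ht].
rewrite (band_rep_act _ E) band_mx_long // !size_cat /= /rad_len.
have := ptarget_visit_last E; move: hs => /= hs; case: eqP; lia.
Qed.

Lemma band_rep_module lam : is_module n [:: m] (band_rep lam).
Proof.
split; [exact: band_rep_unit | exact: band_rep_mul | | exact: band_rep_zero_rel].
by move=> i s l1 l2 hi _; apply: band_rep_comm_rel.
Qed.

Lemma ptarget_vertex_loop v : vertex v -> ptarget n (v, [:: Aa v; Bb v]) = Some v.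
Proof. by move=> hv; rewrite ptarget_loop //; case/vertexP: hv => ->; lia. Qed.

Lemma ptarget_cross : ptarget n (1%N, up 1 m.-1) = Some m.
Proof. by rewrite ptarget_up //; [congr Some|]; lia. Qed.

Lemma ptarget_back : ptarget n (m, down m m.-1) = Some 1%N.
Proof. by rewrite ptarget_down; [congr Some|]; lia. Qed.

Section Submodules.
Variables (lam : K) (W : 'M[K]_4).
Hypothesis sW : is_submod n [:: m] (band_rep lam) W.

Lemma band_submod_mul s l t (w : 'rV_4) : vertex s -> vertex t ->
  ptarget n (s, l) = Some t -> (w <= W)%MS -> (w *m band_mx lam s t (size l) <= W)%MS.
Proof.
move=> hs ht E hw; rewrite -(band_rep_act _ E).
exact: submod_mul sW (Spath_vertex hs ht E) hw.
Qed.

Lemma band_submod_soc v (w : 'rV_4) : vertex v -> (w <= W)%MS -> w 0 (top v) != 0 ->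
  (erow (soc v) <= W)%MS.
Proof.
move=> hv hw w0; have := band_submod_mul hv hv (ptarget_vertex_loop hv) hw.
by rewrite band_mx_loop mul_row_delta_mx (eqmx_scale _ w0).
Qed.

Lemma band_submod_soc1 v (w : 'rV_4) : vertex v -> (w <= W)%MS -> w 0 (top v) != 0 ->
  (erow (soc 1%N) <= W)%MS.
Proof.
case/vertexP=> -> hw w0; first exact: band_submod_soc vertex1 hw w0.
have := band_submod_mul vertexm vertex1 ptarget_back hw.
by rewrite size_down band_mx_back mul_row_delta_mx (eqmx_scale _ w0).
Qed.

Lemma band_submod_top v (w : 'rV_4) : vertex v -> (w <= W)%MS -> w 0 (top v) != 0 ->
  (erow (top v) <= W)%MS.
Proof.
move=> hv hw w0; have socW := band_submod_soc hv hw w0.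
have := band_submod_mul (l := [::]) hv hv erefl hw.
rewrite band_mx0 /idem mulmxDr !mul_row_delta_mx => topW.
have := addmx_sub topW (scalemx_sub (- w 0 (soc v)) socW).
by rewrite scaleNr addrK (eqmx_scale _ w0).
Qed.

Lemma band_submod_full (w w' : 'rV_4) : (w <= W)%MS -> (w' <= W)%MS ->
  w 0 (top 1%N) != 0 -> w' 0 (top m) != 0 -> (1%:M <= W)%MS.
Proof.
move=> hw hw' w0 w'0.
have := band_submod_top vertex1 hw w0; have := band_submod_soc vertex1 hw w0.
have := band_submod_top vertexm hw' w'0; have := band_submod_soc vertexm hw' w'0.
rewrite /top /soc m_neq1 /= => h3 h2 h1 h0.
by apply/row_subP => -[[|[|[|[|i]]]] Hi]; rewrite row1.
Qed.

End Submodules.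

Lemma band_indecomposable lam : indecomposable n [:: m] (band_rep lam).
Proof.
split=> // U V sU sV capUV /andP[_ fullUV].
have rank0 W : (W <= U :&: V)%MS -> \rank W == 0%N.
  by move/mxrankS; rewrite capUV leqn0.
have [a [b [aU bV eab]]] := addsmx_full_split (erow (top 1%N)) fullUV.
have [c [d [cU dV ecd]]] := addsmx_full_split (erow (top m)) fullUV.
have ab1 : a 0 (top 1%N) + b 0 (top 1%N) = 1.
  by move/rowP/(_ (top 1%N)): eab; rewrite !mxE !eqxx => <-.
have cd1 : c 0 (top m) + d 0 (top m) = 1.
  by move/rowP/(_ (top m)): ecd; rewrite !mxE !eqxx => <-.
have top0 W (w : 'rV_4) v : is_submod n [:: m] (band_rep lam) W -> (w <= W)%MS ->
    vertex v -> ~~ (erow (soc 1%N) <= W)%MS -> w 0 (top v) = 0.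
  by move=> sW hw hv nW; apply: contraNeq nW => /(band_submod_soc1 sW hv hw).
have [socU|socU] := boolP (erow (soc 1%N) <= U)%MS.
  have socV : ~~ (erow (soc 1%N) <= V)%MS.
    apply/negP => socV; have := rank0 _ (erow (soc 1%N)).
    by rewrite sub_capmx socU socV mxrank_delta => /(_ isT).
  rewrite (top0 _ _ _ sV bV vertex1 socV) addr0 in ab1.
  rewrite (top0 _ _ _ sV dV vertexm socV) addr0 in cd1.
  apply/orP; right; apply: rank0; rewrite sub_capmx submx_refl andbT.
  by apply: submx_trans (submx1 V) (band_submod_full sU aU cU _ _); rewrite ?ab1 ?cd1 oner_neq0.
rewrite (top0 _ _ _ sU aU vertex1 socU) add0r in ab1.
rewrite (top0 _ _ _ sU cU vertexm socU) add0r in cd1.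
apply/orP; left; apply: rank0; rewrite sub_capmx submx_refl /=.
by apply: submx_trans (submx1 U) (band_submod_full sV bV dV _ _); rewrite ?ab1 ?cd1 oner_neq0.
Qed.

Lemma band_iso_eq lam lam' :
  iso_mod n [:: m] (band_rep lam) (band_rep lam') -> lam = lam'.
Proof.
case=> f [g [hf fg _]].
have intertw s l t : vertex s -> vertex t -> ptarget n (s, l) = Some t ->
    band_mx lam s t (size l) *m f = f *m band_mx lam' s t (size l).
  by move=> hs ht E; have := hf _ (Spath_vertex hs ht E); rewrite !(band_rep_act _ E).
have := intertw _ _ _ vertex1 vertex1 (ptarget_vertex_loop vertex1).
rewrite !band_mx_loop => f_loop1.
have := intertw _ _ _ vertexm vertexm (ptarget_vertex_loop vertexm).
rewrite !band_mx_loop => f_loopm.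
have := intertw _ _ _ vertexm vertex1 ptarget_back; rewrite size_down !band_mx_back => f_back.
have := intertw _ _ _ vertex1 vertexm ptarget_cross; rewrite size_up !band_mx_cross => f_cross.
have f_soc1 r : f (soc 1%N) r = f (top 1%N) (top 1%N) * (r == soc 1%N)%:R.
  move/matrixP/(_ (top 1%N) r): f_loop1.
  by rewrite mul_delta_mx_entry mul_mx_delta_entry eqxx mul1r.
have f_top1 : f (top 1%N) (top 1%N) != 0.
  apply/negP => /eqP f0; move/matrixP/(_ (soc 1%N) (soc 1%N)): fg.
  rewrite !mxE eqxx big1 => [|r _]; last by rewrite f_soc1 f0 !mul0r.
  by move/eqP; rewrite eq_sym oner_eq0.
have e1 : f (soc 1%N) (soc 1%N) = f (top m) (top m).
  move/matrixP/(_ (top m) (soc 1%N)): f_back.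
  by rewrite mul_delta_mx_entry mul_mx_delta_entry !eqxx mul1r mulr1.
have e2 : f (soc m) (soc m) = f (top m) (top m).
  move/matrixP/(_ (top m) (soc m)): f_loopm.
  by rewrite mul_delta_mx_entry mul_mx_delta_entry !eqxx mul1r mulr1.
rewrite -scalemxAl -scalemxAr in f_cross.
move/matrixP/(_ (top 1%N) (soc m)): f_cross; rewrite [LHS]mxE [RHS]mxE.
rewrite mul_delta_mx_entry mul_mx_delta_entry !eqxx mul1r mulr1.
by rewrite e2 -e1 f_soc1 eqxx mulr1 mulrC [RHS]mulrC => /(mulfI f_top1).
Qed.

End Band.

Lemma iso_mod_sym (K : fieldType) n X (M N : rep K) :
  iso_mod n X M N -> iso_mod n X N M.
Proof.
case=> f [g [hf fg gf]]; exists g, f; split=> // p hp.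
rewrite -[LHS]mul1mx -gf !mulmxA -(mulmxA g f) -hf //.
by rewrite mulmxA -(mulmxA _ f g) fg mulmx1.
Qed.

Lemma iso_mod_trans (K : fieldType) n X (M N P : rep K) :
  iso_mod n X M N -> iso_mod n X N P -> iso_mod n X M P.
Proof.
case=> f1 [g1 [h1 fg1 gf1]] [f2 [g2 [h2 fg2 gf2]]].
exists (f1 *m f2), (g2 *m g1); split.
- by move=> p hp; rewrite mulmxA h1 // -!mulmxA h2.
- by rewrite -mulmxA (mulmxA f2) fg2 mul1mx fg1.
- by rewrite -mulmxA (mulmxA g1) gf1 mul1mx gf2.
Qed.

Lemma infinite_rep_type_of_family (K : fieldType) n X (M : K -> rep K) :
  (forall s : seq K, exists x, x \notin s) ->
  (forall a, is_module n X (M a)) -> (forall a, indecomposable n X (M a)) ->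
  (forall a b, iso_mod n X (M a) (M b) -> a = b) -> infinite_rep_type K n X.
Proof.
move=> fresh Mmod Mind Minj [k [F [_ cover]]].
have [s [s_uniq s_size]] : exists s : seq K, uniq s /\ size s = k.+1.
  elim: k.+1 => [|j [s [us ss]]]; first by exists [::].
  by have [x xs] := fresh s; exists (x :: s); rewrite /= xs us ss.
have /fin_all_exists[h hh] (j : 'I_k.+1) : exists i, iso_mod n X (M (nth 0 s j)) (F i).
  exact: cover.
suff /leq_card : injective h by rewrite !card_ord ltnn.
have lt_s (j : 'I_k.+1) : (j < size s)%N by rewrite s_size.
move=> j1 j2 eh; apply/val_inj/eqP; rewrite -(nth_uniq 0 (lt_s j1) (lt_s j2) s_uniq).
apply/eqP/Minj/(iso_mod_trans (hh j1)).
by rewrite eh; apply/iso_mod_sym/hh.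
Qed.

Lemma closed_field_fresh (K : closedFieldType) (s : seq K) : exists x, x \notin s.
Proof.
pose P := \prod_(a <- s) ('X - a%:P).
have /closed_rootP[x rx] : size (P * 'X + 1) != 1%N.
  by rewrite size_polyDl size_mulX ?size_prod_XsubC ?size_poly1 // -size_poly_eq0 size_prod_XsubC.
exists x; apply: contraFN (oner_eq0 K) => xs.
have /eqP Px0 : root P x by rewrite root_prod_XsubC.
by move: rx; rewrite /root !hornerE Px0 mul0r add0r.
Qed.

Theorem lemma1 (K : closedFieldType) (n m : nat) :
  (4 <= n)%N -> (3 <= m <= n - 1)%N -> infinite_rep_type K n [:: m].
Proof.
move=> hn hm; have m_gt2 : (2 < m)%N by lia.
have m_lt_n : (m < n)%N by lia.
apply: (infinite_rep_type_of_family (M := band_rep n m)).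
- exact: closed_field_fresh.
- exact: band_rep_module.
- exact: band_indecomposable.
- exact: band_iso_eq.
Qed.
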